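(* Let $\alpha\in(0,\pi/2)$ and $F(\beta)=f_1(\alpha,\beta,r_0(\alpha,\beta))$ for $\beta\in[0,\alpha]$. Then $\frac{d}{d\beta}F(\beta)=0$ for some $0\le\beta\le\alpha$ if and only if $\alpha\in[\pi/6,\pi/3]$ and $$\beta=\tfrac12\arccos\!\left(\frac{-2\cos(4\alpha)+\cos(6\alpha)+2}{3-2\cos(4\alpha)}\right).$$
   Context: $f_1(\alpha,\beta,r)=\frac{2\sin\alpha}{\cos\beta(\tan\alpha+\tan\beta)}\cdot\frac{1+\frac{2\tan\beta}{\tan\alpha+\tan\beta}r}{\sqrt{1+r^2+2\cos(2\alpha)r}}$; with $A=\frac{2\tan\beta}{\tan\alpha+\tan\beta}$ and $B=2\cos(2\alpha)$, $r_0(\alpha,\beta)=\frac{2A-B}{2-AB}$. *)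

From Stdlib Require Import Reals.
From Coquelicot Require Import Coquelicot.
Open Scope R_scope.

Definition f1 (a b r : R) : R :=
  (2 * sin a / (cos b * (tan a + tan b))) *
  ((1 + (2 * tan b / (tan a + tan b)) * r) /
   sqrt (1 + r ^ 2 + 2 * cos (2 * a) * r)).

Definition Acoef (a b : R) : R := 2 * tan b / (tan a + tan b).
Definition Bcoef (a : R) : R := 2 * cos (2 * a).

Definition r0 (a b : R) : R :=
  (2 * Acoef a b - Bcoef a) / (2 - Acoef a b * Bcoef a).

Definition Fab (a : R) (b : R) : R := f1 a b (r0 a b).

From Stdlib Require Import Reals Rtrigo_facts Lra Psatz.
From Coquelicot Require Import Coquelicot.
Open Scope R_scope.

(* In the coordinates t = tan a, s = tan b the square of F is the rational
   function (1 + s^2) Fnum t s / (t + s)^4, and its s-derivative factors as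
   2 (1 + 5 t^2) (s - s0) Q / (t + s)^5 with s0 = crit_tan t and
   Q = 3 t s^2 + (t^2 - 1) s + t > 0 for 0 <= s <= t.  So F' (b) = 0 exactly
   when tan b = s0.  The constraint 0 <= s0 <= t means 1/3 <= t^2 <= 3, i.e.
   pi/6 <= a <= pi/3, and then b = atan s0 = acos ((1 - s0^2) / (1 + s0^2)) / 2,
   which is the stated expression once cos (4a) and cos (6a) are written in
   terms of cos (2a) = (1 - t^2) / (1 + t^2). *)

Definition Fnum (t s : R) : R :=
  (1 + t^2) * (t + s)^2 - 4 * (1 - t^2) * s * (t + s) + 4 * (1 + t^2) * s^2.

Definition r0_num (t s : R) : R := 2 * s * (1 + t^2) - (1 - t^2) * (t + s).

Definition r0_den (t s : R) : R := (t + s) * (1 + t^2) - 2 * s * (1 - t^2).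

Definition Fsq (t s : R) : R := (1 + s^2) * Fnum t s / (t + s)^4.

Definition crit_tan (t : R) : R := t * (3 - t^2) / (1 + 5 * t^2).

Lemma Fnum_pos t s : t <> 0 -> 0 < Fnum t s.
Proof.
  intros Ht.
  assert (Hsos : (1 + t^2) * Fnum t s = r0_den t s ^ 2 + 16 * t^2 * s^2)
    by (unfold Fnum, r0_den; ring).
  assert (Ht2 : 0 < t^2) by (apply pow2_gt_0; exact Ht).
  assert (0 < r0_den t s ^ 2 + 16 * t^2 * s^2).
  { destruct (Req_dec s 0) as [-> | Hs].
    - unfold r0_den. nra.
    - assert (0 < s^2) by (apply pow2_gt_0; exact Hs). nra. }
  nra.
Qed.

Lemma Fsq_pos t s : t <> 0 -> t + s <> 0 -> 0 < Fsq t s.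
Proof.
  intros Ht Hts. unfold Fsq.
  assert (0 < Fnum t s) by now apply Fnum_pos.
  assert (0 < (t + s)^4).
  { replace ((t + s)^4) with (((t + s)^2)^2) by ring.
    apply pow2_gt_0, pow_nonzero, Hts. }
  apply Rdiv_lt_0_compat; nra.
Qed.

Lemma Fsq_derive t s : t + s <> 0 ->
  is_derive (Fsq t) s
    (2 * (1 + 5 * t^2) * (s - crit_tan t) * (3 * t * s^2 + (t^2 - 1) * s + t) / (t + s)^5).
Proof.
  intros Hts. unfold Fsq, Fnum, crit_tan.
  auto_derive; [change ((t + s)^4 <> 0); now apply pow_nonzero |].
  field. split; [nra | exact Hts].
Qed.

Lemma cofactor_pos t s : 0 < t -> 0 <= s <= t -> 0 < 3 * t * s^2 + (t^2 - 1) * s + t.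
Proof.
  intros Ht [Hs0 Hst].
  assert (0 <= t * s^2) by (apply Rmult_le_pos; nra).
  assert (0 < t^3) by (apply pow_lt; exact Ht).
  destruct (Rle_lt_dec 1 (t^2)); nra.
Qed.

Lemma r0_den_pos t s : 0 < t -> 0 <= s <= t -> 0 < r0_den t s.
Proof.
  intros Ht [Hs0 Hst]. unfold r0_den.
  assert (0 < t^3) by (apply pow_lt; exact Ht).
  destruct (Rle_lt_dec 1 (3 * t^2)); nra.
Qed.

Lemma crit_tan_range t : 0 < t -> (0 <= crit_tan t <= t <-> 1 / 3 <= t^2 <= 3).
Proof.
  intros Ht.
  assert (H5 : 0 < 1 + 5 * t^2) by nra.
  assert (Hc : crit_tan t * (1 + 5 * t^2) = t * (3 - t^2)) by (unfold crit_tan; field; lra).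
  assert (Hlo : 0 <= crit_tan t <-> t^2 <= 3).
  { split; intros H.
    - assert (0 <= t * (3 - t^2)) by (rewrite <- Hc; nra). nra.
    - unfold crit_tan. apply Rmult_le_pos; [nra | apply Rlt_le, Rinv_0_lt_compat, H5]. }
  assert (Hhi : crit_tan t <= t <-> 1 / 3 <= t^2).
  { split; intros H.
    - assert (t * (3 - t^2) <= t * (1 + 5 * t^2)) by (rewrite <- Hc; nra). nra.
    - apply Rmult_le_reg_r with (1 + 5 * t^2); [exact H5 |]. rewrite Hc. nra. }
  tauto.
Qed.

Lemma cos_2a_tan x : cos x <> 0 -> cos (2 * x) = (1 - tan x ^ 2) / (1 + tan x ^ 2).
Proof.
  intros Hc. pose proof (sin2_cos2 x) as Hsc. unfold Rsqr in Hsc.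
  rewrite cos_2a. unfold tan.
  replace (1 + (sin x / cos x) ^ 2) with ((sin x * sin x + cos x * cos x) / (cos x * cos x))
    by (field; exact Hc).
  rewrite Hsc. field. exact Hc.
Qed.

Lemma cos_3a x : cos (3 * x) = 4 * cos x ^ 3 - 3 * cos x.
Proof.
  replace (3 * x) with (2 * x + x) by ring.
  rewrite cos_plus, cos_2a_cos, sin_2a.
  pose proof (sin2_cos2 x) as Hsc. unfold Rsqr in Hsc.
  replace (2 * sin x * cos x * sin x) with (2 * cos x * (sin x * sin x)) by ring.
  replace (sin x * sin x) with (1 - cos x * cos x) by lra.
  ring.
Qed.

Lemma half_acos_atan s : 0 <= s -> / 2 * acos ((1 - s^2) / (1 + s^2)) = atan s.
Proof.
  intros Hs.
  pose proof (atan_bound s) as Hb.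
  assert (Hpos : 0 <= atan s).
  { destruct (Req_dec s 0) as [-> | Hs0]; [rewrite atan_0; lra |].
    rewrite <- atan_0. apply Rlt_le, atan_increasing. lra. }
  assert (Hcos : cos (2 * atan s) = (1 - s^2) / (1 + s^2)).
  { rewrite cos_2a_tan, tan_atan; [reflexivity |].
    apply Rgt_not_eq, cos_gt_0; lra. }
  rewrite <- Hcos, acos_cos by lra. field.
Qed.

Lemma tan_le_iff x y : - (PI / 2) < x < PI / 2 -> - (PI / 2) < y < PI / 2 ->
  (tan x <= tan y <-> x <= y).
Proof.
  intros Hx Hy. split; intros Hle.
  - destruct (Rle_or_lt x y) as [| Hyx]; [assumption |].
    pose proof (tan_increasing y x) as Hlt. lra.
  - destruct (Req_dec x y) as [-> | Hxy]; [lra |].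
    apply Rlt_le, tan_increasing; lra.
Qed.

Lemma tan_range a b : 0 < a < PI / 2 -> 0 <= b <= a -> 0 <= tan b <= tan a.
Proof.
  intros Ha Hb. pose proof PI_RGT_0 as Hpi.
  split; [rewrite <- tan_0 |]; apply tan_le_iff; lra.
Qed.

Lemma PI6_PI3_iff_tan_sq a : 0 < a < PI / 2 ->
  (PI / 6 <= a <= PI / 3 <-> 1 / 3 <= tan a ^ 2 <= 3).
Proof.
  intros Ha. pose proof PI_RGT_0 as Hpi.
  assert (Ht : 0 < tan a) by (apply tan_gt_0; lra).
  rewrite <- (tan_le_iff (PI / 6) a), <- (tan_le_iff a (PI / 3)), tan_PI6, tan_PI3 by lra.
  assert (H3 : 0 < sqrt 3) by (apply sqrt_lt_R0; lra).
  assert (H33 : sqrt 3 * sqrt 3 = 3) by (apply sqrt_sqrt; lra).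
  assert (Hinv : 1 / sqrt 3 * (1 / sqrt 3) = 1 / 3).
  { replace (1 / 3) with (1 / (sqrt 3 * sqrt 3)) by now rewrite H33. field; lra. }
  assert (0 < 1 / sqrt 3) by (apply Rdiv_lt_0_compat; lra).
  split; intros [Hlo Hhi]; split; nra.
Qed.

Lemma cos_ratio_crit_tan a : cos a <> 0 ->
  (- 2 * cos (4 * a) + cos (6 * a) + 2) / (3 - 2 * cos (4 * a))
  = (1 - crit_tan (tan a) ^ 2) / (1 + crit_tan (tan a) ^ 2).
Proof.
  intros Hca.
  replace (4 * a) with (2 * (2 * a)) by ring.
  replace (6 * a) with (3 * (2 * a)) by ring.
  rewrite cos_2a_cos, cos_3a, (cos_2a_tan a Hca).
  unfold crit_tan. set (t := tan a).
  assert (0 < 1 + t^2) by nra.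
  assert (0 < 1 + 5 * t^2) by nra.
  field. repeat split; nra.
Qed.

Lemma tan_eq_crit_tan_iff a b : 0 < a < PI / 2 -> 0 <= b <= a ->
  (tan b = crit_tan (tan a) <->
   PI / 6 <= a <= PI / 3 /\
   b = / 2 * acos ((- 2 * cos (4 * a) + cos (6 * a) + 2) / (3 - 2 * cos (4 * a)))).
Proof.
  intros Ha Hb. pose proof PI_RGT_0 as Hpi.
  assert (Hca : cos a <> 0) by (apply Rgt_not_eq, cos_gt_0; lra).
  pose proof (tan_range a b Ha Hb) as Hs.
  rewrite cos_ratio_crit_tan, PI6_PI3_iff_tan_sq, <- crit_tan_range
    by (try apply tan_gt_0; lra).
  split.
  - intros Hc. rewrite <- Hc, half_acos_atan, atan_tan by lra. lra.
  - intros [Hc ->]. rewrite half_acos_atan, tan_atan by lra. reflexivity.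
Qed.

Lemma locally_pos (f : R -> R) y : continuous f y -> 0 < f y -> locally y (fun x => 0 < f x).
Proof. intros Hf Hy. exact (Hf _ (open_gt 0 (f y) Hy)). Qed.

Lemma is_derive_zero_iff (f g : R -> R) x l :
  locally x (fun y => f y = g y) -> is_derive g x l -> (is_derive f x 0 <-> l = 0).
Proof.
  intros Hfg Hg. split.
  - intros Hf. rewrite <- (is_derive_unique g x l Hg).
    apply is_derive_unique, (is_derive_ext_loc f); assumption.
  - intros ->. apply (is_derive_ext_loc g); [| exact Hg].
    exact (filter_imp _ _ (fun y H => eq_sym H) Hfg).
Qed.

Lemma r0_tan a x : cos a <> 0 -> tan a + tan x <> 0 -> r0_den (tan a) (tan x) <> 0 ->
  r0 a x = r0_num (tan a) (tan x) / r0_den (tan a) (tan x).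
Proof.
  intros Hca Hts Hg.
  unfold r0, Acoef, Bcoef. rewrite (cos_2a_tan a Hca).
  unfold r0_num, r0_den in *.
  assert (0 < 1 + tan a ^ 2) by nra.
  field. repeat split; lra.
Qed.

Lemma Fab_tan a x : 0 < cos a -> 0 < cos x -> 0 < tan a -> 0 < tan a + tan x ->
  0 < r0_den (tan a) (tan x) -> Fab a x = sqrt (Fsq (tan a) (tan x)).
Proof.
  intros Hca Hcx Ht Hts Hg.
  unfold Fab, f1. rewrite r0_tan by lra.
  rewrite (sin_tan a Hca), (cos_tan x Hcx), (cos_2a_tan a) by lra.
  rewrite !Rsqr_pow2.
  set (t := tan a) in *; set (s := tan x) in *; clearbody t s.
  set (A := 2 * s / (t + s)); set (r := r0_num t s / r0_den t s).
  assert (Ht2 : 0 < 1 + t^2) by nra.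
  assert (HAr : 1 + A * r = Fnum t s / ((t + s) * r0_den t s)).
  { unfold A, r, Fnum, r0_num, r0_den in *. field; lra. }
  assert (HD : 1 + r^2 + 2 * ((1 - t^2) / (1 + t^2)) * r
               = 4 * t^2 * Fnum t s / ((1 + t^2) * r0_den t s ^ 2)).
  { unfold r, Fnum, r0_num, r0_den in *. field; lra. }
  rewrite HAr, HD.
  assert (HN : 0 < Fnum t s) by (apply Fnum_pos; lra).
  set (ct := sqrt (1 + t^2)); set (cs := sqrt (1 + s^2));
    set (q := sqrt (4 * t^2 * Fnum t s / ((1 + t^2) * r0_den t s ^ 2))).
  assert (HDpos : 0 < 4 * t^2 * Fnum t s / ((1 + t^2) * r0_den t s ^ 2)).
  { apply Rdiv_lt_0_compat; apply Rmult_lt_0_compat; nra. }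
  assert (Hct : 0 < ct) by (apply sqrt_lt_R0; lra).
  assert (Hcs : 0 < cs) by (apply sqrt_lt_R0; nra).
  assert (Hq : 0 < q) by (apply sqrt_lt_R0; exact HDpos).
  symmetry. apply sqrt_lem_1.
  - apply Rlt_le, Fsq_pos; lra.
  - apply Rlt_le. unfold Rdiv.
    repeat (apply Rmult_lt_0_compat || apply Rinv_0_lt_compat); lra.
  - transitivity (4 * t^2 * (cs * cs) * Fnum t s ^ 2
                  / ((ct * ct) * (t + s)^4 * r0_den t s ^ 2 * (q * q))).
    + field; lra.
    + unfold ct, cs, q. rewrite !sqrt_sqrt by nra.
      unfold Fsq. field; lra.
Qed.

Lemma Fab_near_tan a b : 0 < a < PI / 2 -> 0 <= b <= a ->
  locally b (fun x => Fab a x = sqrt (Fsq (tan a) (tan x))).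
Proof.
  intros Ha Hb. pose proof PI_RGT_0 as Hpi.
  assert (Hca : 0 < cos a) by (apply cos_gt_0; lra).
  assert (Hcb : 0 < cos b) by (apply cos_gt_0; lra).
  assert (Ht : 0 < tan a) by (apply tan_gt_0; lra).
  pose proof (tan_range a b Ha Hb) as Hs.
  assert (Htan : ex_derive tan b) by (eexists; apply is_derive_tan, Rgt_not_eq, Hcb).
  assert (Hnear : locally b (fun x =>
            0 < cos x /\ 0 < tan a + tan x /\ 0 < r0_den (tan a) (tan x))).
  { repeat apply filter_and; apply locally_pos.
    - apply continuous_cos.
    - exact Hcb.
    - apply (ex_derive_continuous (fun x => tan a + tan x)). auto_derive; tauto.
    - lra.
    - apply (ex_derive_continuous (fun x => r0_den (tan a) (tan x))).
      unfold r0_den. auto_derive; tauto.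
    - now apply r0_den_pos. }
  apply (filter_imp _ _ (fun x '(conj Hcx (conj Hts Hg)) => Fab_tan a x Hca Hcx Ht Hts Hg) Hnear).
Qed.

Lemma sqrt_Fsq_tan_derive t b : 0 < t -> cos b <> 0 -> 0 <= tan b <= t ->
  exists K, 0 < K /\
    is_derive (fun x => sqrt (Fsq t (tan x))) b (K * (tan b - crit_tan t)).
Proof.
  intros Ht Hcb Hs.
  set (s := tan b) in *.
  assert (Hts : t + s <> 0) by lra.
  assert (HF : 0 < Fsq t s) by (apply Fsq_pos; lra).
  assert (HQ : 0 < 3 * t * s^2 + (t^2 - 1) * s + t) by (apply cofactor_pos; assumption).
  assert (Hq : 0 < sqrt (Fsq t s)) by (apply sqrt_lt_R0; exact HF).
  assert (H5 : 0 < (t + s)^5) by (apply pow_lt; lra).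
  exists ((s^2 + 1) * (1 + 5 * t^2) * (3 * t * s^2 + (t^2 - 1) * s + t)
          / ((t + s)^5 * sqrt (Fsq t s))).
  split.
  - apply Rdiv_lt_0_compat; apply Rmult_lt_0_compat; try apply Rmult_lt_0_compat; nra.
  - pose proof (is_derive_sqrt (fun x => Fsq t (tan x)) b _
      (is_derive_comp (Fsq t) tan b _ _ (Fsq_derive t s Hts) (is_derive_tan b Hcb)) HF) as Hd.
    match type of Hd with is_derive _ _ ?l => replace (_ * (s - crit_tan t)) with l end.
    + exact Hd.
    + unfold scal; simpl; unfold mult; simpl. fold s. field. lra.
Qed.

Theorem lemma10 (a : R) (ha : 0 < a < PI / 2) :
  forall b : R, 0 <= b <= a ->
    (is_derive (Fab a) b 0 <->
     (PI / 6 <= a <= PI / 3 /\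
      b = / 2 * acos ((- 2 * cos (4 * a) + cos (6 * a) + 2) / (3 - 2 * cos (4 * a))))).
Proof.
  intros b Hb. pose proof PI_RGT_0 as Hpi.
  rewrite <- (tan_eq_crit_tan_iff a b ha Hb).
  assert (Ht : 0 < tan a) by (apply tan_gt_0; lra).
  assert (Hcb : cos b <> 0) by (apply Rgt_not_eq, cos_gt_0; lra).
  destruct (sqrt_Fsq_tan_derive (tan a) b Ht Hcb (tan_range a b ha Hb)) as [K [HK Hd]].
  rewrite (is_derive_zero_iff _ _ _ _ (Fab_near_tan a b ha Hb) Hd).
  split; intros Hcrit.
  - apply Rmult_integral in Hcrit. lra.
  - rewrite Hcrit, Rminus_diag, Rmult_0_r. reflexivity.
Qed.
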